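(* Let $n\ge2$, $F(a)=\sum_{k=0}^nA_ka^k$ with $A_n=1$, let $x(a)$ be smooth, and set $b_k=\sum_{s=1}^k\frac{F^{(k-s)}}{(k-s)!}\frac{D_a^sx}{(1/2)_s}$ for $k=1,\dots,n$. With $H=\Pi^2+aP_y^2$ one has the identity $$\sum_{k=1}^n b_k\,\Pi^{2k-1}P_y^{2(n-k)+1}=\sum_{k=1}^n\tilde b_k\,H^{n-k}\,\Pi\,P_y^{2k-1},\qquad \tilde b_k=\sum_{s=1}^k\binom{n-s}{k-s}(-a)^{k-s}\,b_{n-s+1}.$$ If moreover $F=\prod_{i=1}^n(a-a_i)$ with distinct real $a_i$ and $x=\sum_{i=1}^n\xi_i\Delta_i^{-1/2}$ with $\Delta_i=\epsilon_i(a-a_i)>0$, $\epsilon_i\in\{\pm1\}$, $\xi_i\in\mathbb{R}$, then for all $k\in\{1,\dots,n\}$ $$\tilde b_k=(-1)^k\sum_{i=1}^n\frac{\xi_i}{\sqrt{\Delta_i}}\,\sigma^i_{k-1}.$$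
   Context: $D_a=d/da$, $F^{(m)}=D_a^mF$; Pochhammer $(z)_0=1$, $(z)_s=z(z+1)\cdots(z+s-1)$. For each $i$, the numbers $\sigma^i_m$ ($-1\le m\le n$) are defined by $\prod_{l\neq i}(a-a_l)=\sum_{m=0}^{n-1}(-1)^m\sigma^i_ma^{n-1-m}$ together with $\sigma^i_{-1}=\sigma^i_n=0$. *)

From Stdlib Require Import Reals Lra.
From Coquelicot Require Export Coquelicot.
Open Scope R_scope.
Definition Rbinomial (n k : nat) : R := Stdlib.Reals.Binomial.C n k.

Fixpoint sumR (n : nat) (f : nat -> R) : R :=
  match n with O => 0 | S m => sumR m f + f m end.

Fixpoint prodR (n : nat) (f : nat -> R) : R :=
  match n with O => 1 | S m => prodR m f * f m end.

Fixpoint poch (z : R) (s : nat) : R :=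
  match s with O => 1 | S m => poch z m * (z + INR m) end.

Definition bcoef (F x : R -> R) (a : R) (k : nat) : R :=
  sumR k (fun j => let s := S j in
    Derive_n F (k - s)%nat a / INR (Stdlib.Arith.Factorial.fact (k - s)%nat) * (Derive_n x s a / poch (1/2) s)).

Definition btilde (F x : R -> R) (n : nat) (a : R) (k : nat) : R :=
  sumR k (fun j => let s := S j in
    Rbinomial (n - s)%nat (k - s)%nat * (- a) ^ (k - s)%nat * bcoef F x a (n - s + 1)%nat).

(** Write [P = Pi^2] and [Q = Py^2].  The first identity is the re-expansion
    of [sum_k b_k P^(k-1) Q^(n-k)] in powers of [P + a Q], obtained by writing
    [P = (P + a Q) - a Q] and using the binomial theorem; it holds for any
    sequence [b].

    For the second, [P = u - a] and [Q = 1] turn it into the equality of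
    [sum_k btilde_k u^(n-k)] and [sum_j b_(j+1) (u - a)^j].  Expand
    [F = sum_m e_m (u - a)^m] at [a]; since
    [D_a^s Delta_i^(-1/2) = (1/2)_s (-1/(a - a_i))^s Delta_i^(-1/2)], one gets
    [b_j = sum_i xi_i Delta_i^(-1/2) sum_(s=1..j) e_(j-s) r_i^s] with
    [r_i = -1/(a - a_i)].  Up to sign, these inner sums are the coefficients
    produced by synthetic division of [F] by [u - a_i], so the generating
    polynomial is [- sum_i xi_i Delta_i^(-1/2) prod_(l <> i) (u - a_l)], and
    comparing coefficients with the [sigma^i_m] gives the claim. *)
From Stdlib Require Import Reals Lia Lra Factorial.
From Coquelicot Require Import Coquelicot.
Open Scope R_scope.

Lemma sumR_ext n f g : (forall i, (i < n)%nat -> f i = g i) -> sumR n f = sumR n g.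
Proof.
  induction n as [|n IH]; intros H; simpl; [reflexivity|].
  rewrite IH, H by (lia || (intros; apply H; lia)); reflexivity.
Qed.

Lemma sumR_plus n f g : sumR n (fun i => f i + g i) = sumR n f + sumR n g.
Proof. induction n as [|n IH]; simpl; [lra|]. rewrite IH; ring. Qed.

Lemma sumR_mult_l n c f : sumR n (fun i => c * f i) = c * sumR n f.
Proof. induction n as [|n IH]; simpl; [ring|]. rewrite IH; ring. Qed.

Lemma sumR_0 n f : (forall i, (i < n)%nat -> f i = 0) -> sumR n f = 0.
Proof.
  induction n as [|n IH]; intros H; simpl; [reflexivity|].
  rewrite IH, H by (lia || (intros; apply H; lia)); ring.
Qed.

Lemma sumR_shift n f : sumR (S n) f = f O + sumR n (fun i => f (S i)).
Proof. induction n as [|n IH]; simpl in *; [ring|]. rewrite IH; ring. Qed.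

Lemma sumR_rev n f : sumR n f = sumR n (fun i => f (n - 1 - i)%nat).
Proof.
  induction n as [|n IH]; [reflexivity|].
  rewrite (sumR_shift n (fun i => f (S n - 1 - i)%nat)). simpl sumR at 1.
  rewrite IH. replace (S n - 1 - 0)%nat with n by lia.
  rewrite (sumR_ext n (fun i => f (n - 1 - i)%nat) (fun i => f (S n - 1 - S i)%nat))
    by (intros; f_equal; lia).
  ring.
Qed.

Lemma sumR_swap n m f :
  sumR n (fun i => sumR m (fun j => f i j)) = sumR m (fun j => sumR n (fun i => f i j)).
Proof.
  induction n as [|n IH]; simpl.
  - symmetry; apply sumR_0; reflexivity.
  - rewrite IH, <- sumR_plus; reflexivity.
Qed.

Lemma sumR_triangle n g :
  sumR n (fun j => sumR (S j) (fun i => g j i))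
  = sumR n (fun i => sumR (n - i) (fun m => g (i + m)%nat i)).
Proof.
  induction n as [|n IH]; [reflexivity|].
  change (sumR (S n) ?f) with (sumR n f + f n). rewrite IH.
  rewrite (sumR_ext n (fun i => sumR (S n - i) (fun m => g (i + m)%nat i))
             (fun i => sumR (n - i) (fun m => g (i + m)%nat i) + g n i)).
  2: { intros i Hi. replace (S n - i)%nat with (S (n - i)) by lia. simpl.
       replace (i + (n - i))%nat with n by lia. reflexivity. }
  rewrite sumR_plus. replace (S n - n)%nat with 1%nat by lia. simpl.
  rewrite Nat.add_0_r. change (fun i => g n i) with (g n). ring.
Qed.

Lemma sumR_single n k f :
  (k < n)%nat -> (forall m, (m < n)%nat -> m <> k -> f m = 0) -> sumR n f = f k.
Proof.
  induction n as [|n IH]; intros Hk H; [lia|]. simpl.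
  destruct (Nat.eq_dec k n) as [->|Hkn].
  - rewrite sumR_0 by (intros; apply H; lia). ring.
  - rewrite IH, (H n) by (lia || (intros; apply H; lia)). ring.
Qed.

Lemma sum_f_R0_sumR f n : sum_f_R0 f n = sumR (S n) f.
Proof. induction n as [|n IH]; simpl in *; [ring|]. rewrite IH; reflexivity. Qed.

Lemma sumR_sum_n f n : sumR (S n) f = sum_n f n.
Proof.
  induction n as [|n IH]; [simpl; rewrite sum_O; ring|].
  rewrite sum_Sn, <- IH; reflexivity.
Qed.

Lemma prodR_ext n f g : (forall i, (i < n)%nat -> f i = g i) -> prodR n f = prodR n g.
Proof.
  induction n as [|n IH]; intros H; simpl; [reflexivity|].
  rewrite IH, H by (lia || (intros; apply H; lia)); reflexivity.
Qed.

Lemma prodR_pick n f i :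
  (i < n)%nat -> f i * prodR n (fun l => if Nat.eqb l i then 1 else f l) = prodR n f.
Proof.
  induction n as [|n IH]; intros Hi; [lia|]. simpl.
  destruct (Nat.eqb_spec n i) as [->|Hni].
  - rewrite (prodR_ext i _ f); [ring|].
    intros l Hl. destruct (Nat.eqb_spec l i); [lia|reflexivity].
  - rewrite <- IH by lia. ring.
Qed.

(** * Re-expansion of a homogeneous polynomial in powers of [P + a Q] *)

Definition btilde_seq (b : nat -> R) (n : nat) (a : R) (k : nat) : R :=
  sumR k (fun j => let s := S j in
    Rbinomial (n - s)%nat (k - s)%nat * (- a) ^ (k - s)%nat * b (n - s + 1)%nat).

Lemma sumR_rebase b n a P Q :
  sumR n (fun j => b (S j) * P ^ j * Q ^ (n - S j))
  = sumR n (fun j => btilde_seq b n a (S j) * (P + a * Q) ^ (n - S j) * Q ^ j).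
Proof.
  unfold btilde_seq. symmetry.
  rewrite (sumR_ext n _ (fun j => sumR (S j) (fun i =>
     Rbinomial (n - S i) (S j - S i) * (- a) ^ (S j - S i) * b (n - S i + 1)%nat
     * ((P + a * Q) ^ (n - S j) * Q ^ j)))).
  2: { intros j _. rewrite Rmult_assoc, Rmult_comm, <- sumR_mult_l.
       apply sumR_ext; intros; ring. }
  rewrite sumR_triangle.
  rewrite (sumR_ext n _ (fun i => b (n - i)%nat * Q ^ i * P ^ (n - S i))).
  - rewrite (sumR_rev n (fun j => b (S j) * _ * _)).
    apply sumR_ext; intros i Hi.
    replace (S (n - 1 - i)) with (n - i)%nat by lia.
    replace (n - (n - i))%nat with i by lia.
    replace (n - 1 - i)%nat with (n - S i)%nat by lia. ring.
  - intros i Hi. set (N := (n - S i)%nat).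
    replace (P ^ N) with ((- a * Q + (P + a * Q)) ^ N) by (f_equal; ring).
    rewrite binomial, sum_f_R0_sumR, <- sumR_mult_l.
    replace (n - i)%nat with (S N) by (unfold N; lia).
    apply sumR_ext; intros m Hm.
    replace (S (i + m) - S i)%nat with m by lia.
    replace (n - S (i + m))%nat with (N - m)%nat by (unfold N; lia).
    replace (N + 1)%nat with (S N) by lia.
    unfold Rbinomial. rewrite pow_add, Rpow_mult_distr. ring.
Qed.

Lemma sumR_rebase_odd b n a Pi Py :
  sumR n (fun j => let k := S j in
            b k * Pi ^ (2 * k - 1)%nat * Py ^ (2 * (n - k) + 1)%nat)
  = sumR n (fun j => let k := S j in
            btilde_seq b n a k * (Pi ^ 2 + a * Py ^ 2) ^ (n - k) * Pi * Py ^ (2 * k - 1)%nat).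
Proof.
  assert (Hodd : forall p z, z ^ S (2 * p) = z * (z ^ 2) ^ p)
    by (intros p z; change (z ^ S (2 * p)) with (z * z ^ (2 * p)); rewrite pow_mult; reflexivity).
  rewrite (sumR_ext n _ (fun j => Pi * Py * (b (S j) * (Pi ^ 2) ^ j * (Py ^ 2) ^ (n - S j)))).
  2: { intros j _. cbv zeta.
       replace (2 * S j - 1)%nat with (S (2 * j)) by lia.
       replace (2 * (n - S j) + 1)%nat with (S (2 * (n - S j))) by lia.
       rewrite !Hodd. ring. }
  rewrite sumR_mult_l, (sumR_rebase b n a), <- sumR_mult_l.
  apply sumR_ext; intros j _. cbv zeta.
  replace (2 * S j - 1)%nat with (S (2 * j)) by lia.
  rewrite Hodd. ring.
Qed.

Lemma sumR_btilde_seq_pow b n a u :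
  sumR n (fun m => btilde_seq b n a (S m) * u ^ (n - 1 - m))
  = sumR n (fun j => b (S j) * (u - a) ^ j).
Proof.
  rewrite (sumR_ext n (fun j => b (S j) * _) (fun j => b (S j) * (u - a) ^ j * 1 ^ (n - S j)))
    by (intros; rewrite pow1; ring).
  rewrite (sumR_rebase b n a). apply sumR_ext; intros m Hm.
  rewrite !pow1. replace (u - a + a * 1) with u by ring.
  replace (n - 1 - m)%nat with (n - S m)%nat by lia. ring.
Qed.

(** * Taylor coefficients of polynomials *)

Lemma Derive_n_poly_center N e a k :
  (k < N)%nat ->
  Derive_n (fun t => sumR N (fun m => e m * (t - a) ^ m)) k a = INR (fact k) * e k.
Proof.
  intros Hk. destruct N as [|N]; [lia|].
  rewrite (Derive_n_ext _ (fun t => sum_n (fun m => e m * (t - a) ^ m) N))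
    by (intros; apply sumR_sum_n).
  rewrite Derive_n_sum_n.
  2: { apply filter_forall; intros t m j _ _.
       apply ex_derive_n_scal_l, (ex_derive_n_comp_trans (fun y => y ^ m)), ex_derive_n_pow. }
  rewrite <- sumR_sum_n.
  assert (Hterm : forall m, Derive_n (fun t => e m * (t - a) ^ m) k a
                 = e m * if Compare_dec.le_dec k m
                         then INR (fact m) / INR (fact (m - k)) * 0 ^ (m - k) else 0).
  { intros m. rewrite Derive_n_scal_l.
    change (fun t => (t - a) ^ m) with (fun t => (fun y => y ^ m) (t + - a)).
    rewrite Derive_n_comp_trans, Derive_n_pow, Rplus_opp_r. reflexivity. }
  rewrite (sumR_single (S N) k _ Hk).
  2: { intros m _ Hmk. rewrite Hterm.
       destruct Compare_dec.le_dec; [rewrite pow_i by lia|]; ring. }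
  rewrite Hterm, Nat.sub_diag. destruct Compare_dec.le_dec; [|lia].
  simpl. field.
Qed.

Lemma poly_coef_unique N e1 e2 :
  (forall u, sumR N (fun m => e1 m * u ^ m) = sumR N (fun m => e2 m * u ^ m)) ->
  forall k, (k < N)%nat -> e1 k = e2 k.
Proof.
  intros H k Hk.
  apply Rmult_eq_reg_l with (INR (fact k)); [|apply INR_fact_neq_0].
  rewrite <- !(Derive_n_poly_center N _ 0) by exact Hk.
  apply Derive_n_ext; intros t. rewrite Rminus_0_r. apply H.
Qed.

Lemma poly_coef_unique_rev N p q :
  (forall u, sumR N (fun m => p m * u ^ (N - 1 - m)) = sumR N (fun m => q m * u ^ (N - 1 - m))) ->
  forall k, (k < N)%nat -> p k = q k.
Proof.
  intros H k Hk.
  assert (Hrev : forall f : nat -> R, forall u,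
            sumR N (fun m => f m * u ^ (N - 1 - m)) = sumR N (fun m => f (N - 1 - m)%nat * u ^ m)).
  { intros f u. rewrite sumR_rev. apply sumR_ext; intros m Hm.
    replace (N - 1 - (N - 1 - m))%nat with m by lia. reflexivity. }
  replace k with (N - 1 - (N - 1 - k))%nat by lia.
  apply (poly_coef_unique N (fun m => p (N - 1 - m)%nat) (fun m => q (N - 1 - m)%nat)); [|lia].
  intros u. rewrite <- !Hrev. apply H.
Qed.

Lemma prodR_taylor n ai a :
  exists e : nat -> R, e n = 1 /\ (forall m, (n < m)%nat -> e m = 0) /\
    forall t, prodR n (fun i => t - ai i) = sumR (S n) (fun m => e m * (t - a) ^ m).
Proof.
  induction n as [|n [e [Htop [Hvan He]]]].
  - exists (fun m => if Nat.eqb m 0 then 1 else 0). split; [reflexivity|]. split.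
    + intros [|m] Hm; [lia|reflexivity].
    + intros t; simpl; ring.
  - exists (fun m => match m with O => 0 | S m' => e m' end + (a - ai n) * e m).
    split; [rewrite Htop, Hvan by lia; ring|]. split.
    + intros [|m] Hm; [lia|]. rewrite !Hvan by lia. ring.
    + intros t. simpl prodR. rewrite He.
      set (h := t - a). replace (t - ai n) with (h + (a - ai n)) by (unfold h; ring).
      set (e' := fun m => match m with O => 0 | S m' => e m' end).
      rewrite (sumR_ext (S (S n)) _ (fun m => e' m * h ^ m + (a - ai n) * (e m * h ^ m)))
        by (intros; unfold e'; ring).
      rewrite sumR_plus, sumR_mult_l, (sumR_shift (S n) (fun m => e' m * h ^ m)).
      change (sumR (S (S n)) (fun m => e m * h ^ m))
        with (sumR (S n) (fun m => e m * h ^ m) + e (S n) * h ^ S n).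
      rewrite (Hvan (S n)) by lia.
      rewrite (sumR_ext (S n) (fun i => e' (S i) * h ^ S i) (fun i => h * (e i * h ^ i)))
        by (intros; simpl; ring).
      rewrite sumR_mult_l. simpl. ring.
Qed.

(** * Synthetic division by a linear factor *)

(** If [sum_m e_m h^m] vanishes at [h = -d] and [r = -1/d], then
    [- pow_convolution e r (j+1)] is the coefficient of [h^j] in its quotient
    by [h + d]. *)
Definition pow_convolution (e : nat -> R) (r : R) (j : nat) : R :=
  sumR j (fun l => e (j - S l)%nat * r ^ S l).

Lemma pow_convolution_S e r N :
  pow_convolution e r (S N) = r * (e N + pow_convolution e r N).
Proof.
  unfold pow_convolution. rewrite sumR_shift, Nat.sub_1_r, Rmult_plus_distr_l, <- sumR_mult_l.
  f_equal; [simpl; ring|]. apply sumR_ext; intros; simpl; ring.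
Qed.

Lemma pow_convolution_telescope e d h N :
  d <> 0 ->
  (d + h) * sumR N (fun j => pow_convolution e (-1 / d) (S j) * h ^ j)
  = - sumR N (fun m => e m * h ^ m) + pow_convolution e (-1 / d) N * h ^ N.
Proof.
  intros Hd. induction N as [|N IH].
  - simpl. unfold pow_convolution; simpl. ring.
  - simpl sumR. rewrite Rmult_plus_distr_l, IH, pow_convolution_S. simpl pow. field. exact Hd.
Qed.

Lemma continuous_sumR N (f : nat -> R -> R) u :
  (forall m, (m < N)%nat -> continuous (f m) u) ->
  continuous (fun y => sumR N (fun m => f m y)) u.
Proof.
  induction N as [|N IH]; intros H; simpl; [apply continuous_const|].
  apply (continuous_plus (fun y => sumR N (fun m => f m y)) (f N));
    [apply IH; intros; apply H|apply H]; lia.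
Qed.

Lemma continuous_cancel_factor (f g : R -> R) c :
  (forall u, continuous f u) -> (forall u, continuous g u) ->
  (forall u, (u - c) * f u = (u - c) * g u) -> forall u, f u = g u.
Proof.
  intros Hf Hg H u. destruct (Req_dec u c) as [->|Hu].
  2: { apply Rmult_eq_reg_l with (u - c); [apply H|lra]. }
  assert (Hlim : forall h : R -> R, (forall u, continuous h u) -> is_lim h c (h c))
    by (intros h Hh; apply is_lim_continuity, continuity_pt_filterlim, Hh).
  assert (Hgf : is_lim g c (f c)).
  { apply is_lim_ext_loc with f; [|apply Hlim, Hf].
    exists (mkposreal 1 Rlt_0_1). intros y _ Hy.
    apply Rmult_eq_reg_l with (y - c); [apply H|lra]. }
  apply is_lim_unique in Hgf. rewrite (is_lim_unique _ _ _ (Hlim g Hg)) in Hgf.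
  injection Hgf; auto.
Qed.

Lemma sumR_pow_convolution_cofactor n e a c (G : R -> R) :
  a <> c -> e n = 1 -> (forall u, continuous G u) ->
  (forall u, (u - c) * G u = sumR (S n) (fun m => e m * (u - a) ^ m)) ->
  forall u, sumR n (fun j => pow_convolution e (-1 / (a - c)) (S j) * (u - a) ^ j) = - G u.
Proof.
  intros Hac Htop HG HF.
  assert (Hd : a - c <> 0) by lra.
  assert (Hsplit : forall u, sumR (S n) (fun m => e m * (u - a) ^ m)
                            = sumR n (fun m => e m * (u - a) ^ m) + (u - a) ^ n)
    by (intros; simpl; rewrite Htop; ring).
  assert (Hconv_top : pow_convolution e (-1 / (a - c)) n = -1).
  { (* the telescoped identity at the root [u = c] *)
    pose proof (pow_convolution_telescope e (a - c) (c - a) n Hd) as Htel.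
    pose proof (HF c) as Hroot. rewrite Hsplit in Hroot.
    assert ((c - a) ^ n <> 0) by (apply pow_nonzero; lra).
    apply Rmult_eq_reg_r with ((c - a) ^ n); [|assumption].
    replace (a - c + (c - a)) with 0 in Htel by ring. lra. }
  apply continuous_cancel_factor with c.
  - intros u. apply (continuous_sumR n (fun j u => _ * (u - a) ^ j)); intros m _.
    apply (@ex_derive_continuous R_AbsRing R_NormedModule). auto_derive. exact I.
  - intros u. apply (@continuous_opp _ R_AbsRing R_NormedModule), HG.
  - intros u. replace (u - c) with (a - c + (u - a)) at 1 by ring.
    rewrite pow_convolution_telescope, Hconv_top by exact Hd.
    rewrite <- Ropp_mult_distr_r, HF, Hsplit. ring.
Qed.

(** * Derivatives of inverse square roots *)

Lemma Derive_n_chain (D : R -> Prop) (g : nat -> R -> R) :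
  (forall t, D t -> locally t D) ->
  (forall s t, D t -> is_derive (g s) t (g (S s) t)) ->
  forall s t, D t -> Derive_n (g O) s t = g s t.
Proof.
  intros Hopen Hder s. induction s as [|s IH]; intros t Ht; [reflexivity|].
  simpl. rewrite (Derive_ext_loc _ (g s)).
  - apply is_derive_unique, Hder, Ht.
  - apply (filter_imp D); [exact IH|exact (Hopen t Ht)].
Qed.

Lemma locally_forall_lt n t (P : nat -> R -> Prop) :
  (forall i, (i < n)%nat -> locally t (P i)) ->
  locally t (fun y => forall i, (i < n)%nat -> P i y).
Proof.
  induction n as [|n IH]; intros H; [apply filter_forall; intros; lia|].
  apply (filter_imp (fun y => (forall i, (i < n)%nat -> P i y) /\ P n y)).
  - intros y [Hlt Hn] i Hi. destruct (Nat.eq_dec i n) as [->|]; [exact Hn|apply Hlt; lia].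
  - apply filter_and; [apply IH; intros; apply H|apply H]; lia.
Qed.

Lemma locally_affine_pos eps c t : 0 < eps * (t - c) -> locally t (fun y => 0 < eps * (y - c)).
Proof.
  intros H. assert (Htc : 0 < Rabs (t - c)) by (apply Rabs_pos_lt; intros E; rewrite E in H; lra).
  exists (mkposreal _ Htc). intros y Hy. change (Rabs (y - t) < Rabs (t - c)) in Hy.
  apply Rabs_def2 in Hy.
  destruct (Rcase_abs (t - c)); [rewrite Rabs_left in Hy|rewrite Rabs_right in Hy]; nra.
Qed.

Lemma is_derive_sumR N (f : nat -> R -> R) (f' : nat -> R) t :
  (forall m, (m < N)%nat -> is_derive (f m) t (f' m)) ->
  is_derive (fun y => sumR N (fun m => f m y)) t (sumR N f').
Proof.
  induction N as [|N IH]; intros H; simpl.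
  - apply (@is_derive_const R_AbsRing R_NormedModule).
  - apply (is_derive_plus (fun y => sumR N (fun m => f m y)) (f N));
      [apply IH; intros; apply H|apply H]; lia.
Qed.

Definition inv_sqrt_Dn (eps c : R) (s : nat) (t : R) : R :=
  (-1) ^ s * poch (1 / 2) s / ((t - c) ^ s * sqrt (eps * (t - c))).

Lemma is_derive_inv_sqrt_Dn eps c s t :
  0 < eps * (t - c) -> is_derive (inv_sqrt_Dn eps c s) t (inv_sqrt_Dn eps c (S s) t).
Proof.
  intros H. unfold inv_sqrt_Dn.
  assert (Htc : t - c <> 0) by (intros E; rewrite E, Rmult_0_r in H; lra).
  assert (Hq : 0 < sqrt (eps * (t - c))) by (apply sqrt_lt_R0, H).
  assert (Hts : (t - c) ^ s <> 0) by (apply pow_nonzero, Htc).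
  auto_derive; change (t + - c) with (t - c).
  { repeat split; [exact H|]. apply Rmult_integral_contrapositive_currified; lra. }
  assert (Heps : eps = sqrt (eps * (t - c)) * sqrt (eps * (t - c)) / (t - c))
    by (rewrite sqrt_sqrt by lra; field; exact Htc).
  set (q := sqrt (eps * (t - c))) in *. clearbody q. rewrite Heps.
  replace (INR s * (t - c) ^ Init.Nat.pred s) with (INR s * (t - c) ^ s / (t - c))
    by (destruct s; simpl; field; exact Htc).
  change (poch (1 / 2) (S s)) with (poch (1 / 2) s * (1 / 2 + INR s)).
  rewrite <- !tech_pow_Rmult. field. lra.
Qed.

Lemma Derive_n_sum_inv_sqrt n c eps xi s t :
  (forall i, (i < n)%nat -> 0 < eps i * (t - c i)) ->
  Derive_n (fun t => sumR n (fun i => xi i / sqrt (eps i * (t - c i)))) s t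
  = sumR n (fun i => xi i * inv_sqrt_Dn (eps i) (c i) s t).
Proof.
  intros Ht.
  rewrite (Derive_n_ext _ (fun t => sumR n (fun i => xi i * inv_sqrt_Dn (eps i) (c i) O t))).
  2: { intros y. apply sumR_ext; intros. unfold inv_sqrt_Dn; simpl.
       rewrite !Rmult_1_l. unfold Rdiv. ring. }
  apply (Derive_n_chain (fun t => forall i, (i < n)%nat -> 0 < eps i * (t - c i))
           (fun s t => sumR n (fun i => xi i * inv_sqrt_Dn (eps i) (c i) s t))); [| |exact Ht].
  - intros y Hy. apply locally_forall_lt; intros i Hi. apply locally_affine_pos, Hy, Hi.
  - intros s' y Hy. apply (is_derive_sumR n (fun i y => xi i * inv_sqrt_Dn (eps i) (c i) s' y)).
    intros i Hi. apply is_derive_scal, is_derive_inv_sqrt_Dn, Hy, Hi.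
Qed.

Lemma inv_sqrt_Dn_div_poch eps c s t :
  0 < eps * (t - c) ->
  inv_sqrt_Dn eps c s t / poch (1 / 2) s = / sqrt (eps * (t - c)) * (-1 / (t - c)) ^ s.
Proof.
  intros H.
  assert (Htc : t - c <> 0) by (intros E; rewrite E, Rmult_0_r in H; lra).
  assert (Hpoch : 0 < poch (1 / 2) s).
  { induction s as [|s IH]; simpl; [lra|]. pose proof (pos_INR s). nra. }
  assert (0 < sqrt (eps * (t - c))) by (apply sqrt_lt_R0, H).
  unfold inv_sqrt_Dn, Rdiv. rewrite Rpow_mult_distr, pow_inv.
  field. repeat split; try lra. apply pow_nonzero, Htc.
Qed.

Lemma Derive_n_sum_inv_sqrt_div_poch n c eps xi s t :
  (forall i, (i < n)%nat -> 0 < eps i * (t - c i)) ->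
  Derive_n (fun t => sumR n (fun i => xi i / sqrt (eps i * (t - c i)))) s t / poch (1 / 2) s
  = sumR n (fun i => xi i / sqrt (eps i * (t - c i)) * (-1 / (t - c i)) ^ s).
Proof.
  intros Ht. rewrite Derive_n_sum_inv_sqrt by exact Ht.
  unfold Rdiv at 1. rewrite Rmult_comm, <- sumR_mult_l. apply sumR_ext; intros i Hi.
  transitivity (xi i * (inv_sqrt_Dn (eps i) (c i) s t / poch (1 / 2) s)); [unfold Rdiv; ring|].
  rewrite inv_sqrt_Dn_div_poch by (apply Ht, Hi). unfold Rdiv. ring.
Qed.

Lemma bcoef_expansion F x a n e N c r :
  (forall t, F t = sumR (S n) (fun m => e m * (t - a) ^ m)) ->
  (forall s, Derive_n x s a / poch (1 / 2) s = sumR N (fun i => c i * r i ^ s)) ->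
  forall j, (j <= n)%nat -> bcoef F x a j = sumR N (fun i => c i * pow_convolution e (r i) j).
Proof.
  intros HF Hx j Hj.
  assert (HFm : forall m, (m <= n)%nat -> Derive_n F m a / INR (fact m) = e m).
  { intros m Hm. rewrite (Derive_n_ext _ _ _ _ HF), Derive_n_poly_center by lia.
    field. apply INR_fact_neq_0. }
  unfold bcoef, pow_convolution.
  rewrite (sumR_ext j _ (fun l => sumR N (fun i => c i * (e (j - S l)%nat * r i ^ S l)))).
  - rewrite sumR_swap. apply sumR_ext; intros. apply sumR_mult_l.
  - intros l Hl. cbv zeta. rewrite HFm, Hx, <- sumR_mult_l by lia.
    apply sumR_ext; intros; ring.
Qed.

Lemma btilde_prodR_inv_sqrt n ai eps xi sigma a :
  (forall i, (i < n)%nat -> forall t,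
      prodR n (fun l => if Nat.eqb l i then 1 else t - ai l)
      = sumR n (fun m => (-1) ^ m * sigma i m * t ^ (n - 1 - m)%nat)) ->
  (forall i, (i < n)%nat -> eps i * (a - ai i) > 0) ->
  forall k, (1 <= k <= n)%nat ->
  btilde (fun t => prodR n (fun i => t - ai i))
         (fun t => sumR n (fun i => xi i / sqrt (eps i * (t - ai i)))) n a k
  = (-1) ^ k * sumR n (fun i => xi i / sqrt (eps i * (a - ai i)) * sigma i (k - 1)%nat).
Proof.
  intros Hsig Hpos k Hk.
  set (F := fun t => prodR n (fun i => t - ai i)).
  set (x := fun t => sumR n (fun i => xi i / sqrt (eps i * (t - ai i)))).
  set (c := fun i => xi i / sqrt (eps i * (a - ai i))).
  set (r := fun i => -1 / (a - ai i)).
  destruct (prodR_taylor n ai a) as [e [Htop [_ HF]]].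
  assert (Hb : forall j, (j <= n)%nat ->
             bcoef F x a j = sumR n (fun i => c i * pow_convolution e (r i) j)).
  { apply bcoef_expansion; [exact HF|]. intros s.
    apply Derive_n_sum_inv_sqrt_div_poch, Hpos. }
  assert (Hcof : forall i, (i < n)%nat -> forall u,
             sumR n (fun j => pow_convolution e (r i) (S j) * (u - a) ^ j)
             = - sumR n (fun m => (-1) ^ m * sigma i m * u ^ (n - 1 - m))).
  { intros i Hi. apply sumR_pow_convolution_cofactor; [|exact Htop| |].
    - pose proof (Hpos i Hi). intros E. rewrite E in *. lra.
    - intros u. apply continuous_sumR; intros m _.
      apply (@ex_derive_continuous R_AbsRing R_NormedModule). auto_derive. exact I.
    - intros u. rewrite <- HF, <- Hsig by exact Hi.
      exact (prodR_pick n (fun l => u - ai l) i Hi). }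
  assert (Hgen : forall u,
             sumR n (fun m => btilde F x n a (S m) * u ^ (n - 1 - m))
             = sumR n (fun m => - ((-1) ^ m * sumR n (fun i => c i * sigma i m))
                                * u ^ (n - 1 - m))).
  { intros u. change (btilde F x n a) with (btilde_seq (bcoef F x a) n a).
    rewrite sumR_btilde_seq_pow.
    rewrite (sumR_ext n _ (fun j => sumR n (fun i =>
               c i * (pow_convolution e (r i) (S j) * (u - a) ^ j)))).
    2: { intros j Hj. rewrite Hb, Rmult_comm, <- sumR_mult_l by lia.
         apply sumR_ext; intros; ring. }
    rewrite sumR_swap.
    rewrite (sumR_ext n _ (fun i => sumR n (fun m =>
               - c i * ((-1) ^ m * sigma i m * u ^ (n - 1 - m))))).
    2: { intros i Hi. rewrite !sumR_mult_l, Hcof by exact Hi. ring. }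
    rewrite sumR_swap. apply sumR_ext; intros m _.
    rewrite (sumR_ext n _ (fun i => - ((-1) ^ m * u ^ (n - 1 - m)) * (c i * sigma i m)))
      by (intros; ring).
    rewrite sumR_mult_l. ring. }
  pose proof (poly_coef_unique_rev n _ _ Hgen (k - 1) ltac:(lia)) as Hcoef.
  cbv beta in Hcoef. replace (S (k - 1)) with k in Hcoef by lia. rewrite Hcoef.
  replace k with (S (k - 1)) at 2 by lia. simpl pow. unfold c. ring.
Qed.

Theorem proposition9 :
  (forall (n : nat) (A : nat -> R) (x : R -> R),
      (2 <= n)%nat -> A n = 1 ->
      (forall (k : nat) (t : R), ex_derive_n x k t) ->
      forall a Pi Py : R,
        let F := fun t => sumR (S n) (fun k => A k * t ^ k) in
        sumR n (fun j => let k := S j in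
                  bcoef F x a k * Pi ^ (2 * k - 1)%nat * Py ^ (2 * (n - k) + 1)%nat)
        = sumR n (fun j => let k := S j in
                  btilde F x n a k * (Pi ^ 2 + a * Py ^ 2) ^ (n - k) * Pi * Py ^ (2 * k - 1)%nat))
  /\
  (forall (n : nat) (ai eps xi : nat -> R) (sigma : nat -> nat -> R),
      (2 <= n)%nat ->
      (forall i j : nat, (i < n)%nat -> (j < n)%nat -> i <> j -> ai i <> ai j) ->
      (forall i : nat, (i < n)%nat -> eps i = 1 \/ eps i = -1) ->
      (forall i : nat, (i < n)%nat -> forall t : R,
          prodR n (fun l => if Nat.eqb l i then 1 else t - ai l)
          = sumR n (fun m => (-1) ^ m * sigma i m * t ^ (n - 1 - m)%nat)) ->
      forall a : R, (forall i : nat, (i < n)%nat -> eps i * (a - ai i) > 0) ->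
        let F := fun t => prodR n (fun i => t - ai i) in
        let x := fun t => sumR n (fun i => xi i / sqrt (eps i * (t - ai i))) in
        forall k : nat, (1 <= k <= n)%nat ->
          btilde F x n a k
          = (-1) ^ k * sumR n (fun i => xi i / sqrt (eps i * (a - ai i)) * sigma i (k - 1)%nat)).
Proof.
  (* [sigma] is given by hypothesis and only [Delta_i > 0] is used. *)
  split.
  - intros n A x _ _ _ a Pi Py F.
    exact (sumR_rebase_odd (bcoef F x a) n a Pi Py).
  - intros n ai eps xi sigma _ _ _ Hsig a Hpos F x.
    exact (btilde_prodR_inv_sqrt n ai eps xi sigma a Hsig Hpos).
Qed.
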